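(* Let $\mathcal{X}$ and $\mathcal{Y}$ be Banach spaces, let $\mathcal{G}, \widetilde{\mathcal{G}}_w \in C^1(\mathcal{X};\mathcal{Y})$, and let $F:\mathcal{Y}\times\mathcal{X}\to\mathbb{R}$ be continuously (Fréchet) differentiable with a Lipschitz continuous derivative. Define $f(a) := F(\mathcal{G}(a),a)$ and $\widetilde{f}_w(a) := F(\widetilde{\mathcal{G}}_w(a),a)$. Let $a^\dagger\in\mathcal{X}$ be a stationary point of $\widetilde{f}_w$, i.e. $D\widetilde{f}_w(a^\dagger)=0$. Then $$\|Df(a^\dagger)\|_{\mathcal{X}'} \le \mathscr{C}\left(\|\mathcal{G}(a^\dagger)\|_{\mathcal{Y}} + \|D\mathcal{G}(a^\dagger)\|_{\mathscr{L}(\mathcal{X},\mathcal{Y})} + \|a^\dagger\|_{\mathcal{X}} + 1\right)\left(\mathscr{E}_0(a^\dagger)+\mathscr{E}_1(a^\dagger)+\mathscr{E}_0(a^\dagger)\mathscr{E}_1(a^\dagger)\right),$$ where $\mathscr{C}>0$ is a constant depending only on $F$, $\mathscr{E}_0(a):=\|\mathcal{G}(a)-\widetilde{\mathcal{G}}_w(a)\|_{\mathcal{Y}}$ and $\mathscr{E}_1(a):=\|D\mathcal{G}(a)-D\widetilde{\mathcal{G}}_w(a)\|_{\mathscr{L}(\mathcal{X},\mathcal{Y})}$.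
   Context: $\mathcal{X}'$ denotes the topological dual of $\mathcal{X}$; $\mathscr{L}(\mathcal{X},\mathcal{Y})$ is the space of bounded linear operators with the operator norm; $D$ denotes the Fréchet derivative. *)

From HB Require Import structures.
From mathcomp Require Import all_boot all_order all_algebra.
From mathcomp Require Import all_classical all_reals all_analysis.
Set Implicit Arguments. Unset Strict Implicit. Unset Printing Implicit Defensive.
Import Order.TTheory GRing.Theory Num.Theory.
Import numFieldNormedType.Exports.
Local Open Scope classical_set_scope.
Local Open Scope ring_scope.

Definition opnorm {R : realType} {V W : normedModType R} (L : V -> W) : R :=
  sup [set `|L x| | x in [set x : V | `|x| <= 1]].

Definition C1 {R : realType} {V W : normedModType R} (G : V -> W) : Prop :=
  (forall x, differentiable G x) /\
  (forall x (e : R), 0 < e -> exists2 d : R, 0 < d &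
     forall y, `|y - x| < d -> opnorm (fun v => 'd G y v - 'd G x v) < e).

Definition C1_lipschitz_deriv {R : realType} {V W : normedModType R} (F : V -> W) : Prop :=
  C1 F /\ exists L : R, forall p q,
     opnorm (fun v => 'd F p v - 'd F q v) <= L * `|p - q|.

From HB Require Import structures.
From mathcomp Require Import all_boot all_order all_algebra.
From mathcomp Require Import all_classical all_reals all_analysis.
From mathcomp Require Import ring lra.
Import Order.TTheory GRing.Theory Num.Theory.
Import numFieldNormedType.Exports.
Local Open Scope classical_set_scope.
Local Open Scope ring_scope.
Set Implicit Arguments. Unset Strict Implicit.

(* By the chain rule, Df(a) = DF(p) (DG(a), id) and 0 = DF(q) (DGw(a), id)
   with p = (G a, a) and q = (Gw a, a). Subtracting,
     Df(a) v = (DF(p) - DF(q)) (DG(a) v, v) + DF(q) ((DG(a) - DGw(a)) v, 0).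
   The first term is at most Lip(DF) E0 (|DG(a)| + 1) |v|, the second at most
   (|DF(0)| + Lip(DF) |q|) E1 |v|, and |q| <= |G a| + E0 + |a|. *)

Section OperatorNorm.
Context {R : realType} {V W : normedModType R}.
Variable L : V -> W.

Lemma opnorm_le (M : R) : 0 <= M ->
  (forall x, `|L x| <= M * `|x|) -> opnorm L <= M.
Proof.
move=> M0 LM; apply: ge_sup; first by exists `|L 0|, 0 => //=; rewrite normr0.
move=> _ [x /= x1 <-]; apply: le_trans (LM x) _.
by rewrite -[leRHS]mulr1 ler_wpM2l.
Qed.

Hypotheses (L_scale : forall (c : R) x, L (c *: x) = c *: L x)
  (L_bounded : exists k, forall x, `|L x| <= k * `|x|).

Let L0 : L 0 = 0.
Proof. by rewrite -(scale0r (0 : V)) L_scale scale0r. Qed.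

Let opnorm_ub x : `|x| <= 1 -> `|L x| <= opnorm L.
Proof.
move=> x1; apply: sup_upper_bound; last by exists x.
split; first by exists `|L 0|, 0 => //=; rewrite normr0.
have [k Lk] := L_bounded; exists `|k| => _ [y /= y1 <-].
apply: le_trans (Lk y) _; apply: le_trans (ler_wpM2r (normr_ge0 y) (ler_norm k)) _.
by rewrite -[leRHS]mulr1 ler_wpM2l.
Qed.

Lemma opnorm_ge0 : 0 <= opnorm L.
Proof. by apply: le_trans (opnorm_ub (x := 0) _); rewrite ?normr0. Qed.

Lemma ler_opnorm x : `|L x| <= opnorm L * `|x|.
Proof.
have [->|x0] := eqVneq x 0; first by rewrite L0 !normr0 mulr0.
have nx : 0 < `|x| by rewrite normr_gt0.
have unit_x : `| `|x|^-1 *: x| <= 1 by rewrite normrZ normfV normr_id mulVf ?gt_eqF.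
have := opnorm_ub unit_x.
by rewrite L_scale normrZ normfV normr_id -ler_pdivlMl ?invr_gt0 // invrK mulrC.
Qed.

End OperatorNorm.

Section DifferentialOperatorNorm.
Context {R : realType} {U W : normedModType R}.
Implicit Types f g : U -> W.

Lemma diff_bounded f x : differentiable f x ->
  exists k, forall v, `|'d f x v| <= k * `|v|.
Proof. by move=> /diff_continuous/linear_lipschitz [k _ fk]; exists k. Qed.

Lemma diffB_bounded f g x y : differentiable f x -> differentiable g y ->
  exists k, forall v, `|'d f x v - 'd g y v| <= k * `|v|.
Proof.
move=> /diff_bounded [k fk] /diff_bounded [k' gk']; exists (k + k') => v.
by rewrite mulrDl (le_trans (ler_normB _ _)) // lerD.
Qed.

Lemma diff_opnorm_ge0 f x : differentiable f x -> 0 <= opnorm ('d f x).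
Proof. by move=> /diff_bounded /opnorm_ge0. Qed.

Lemma ler_diff_opnorm f x v : differentiable f x ->
  `|'d f x v| <= opnorm ('d f x) * `|v|.
Proof. by move=> df; apply: ler_opnorm (diff_bounded df) v => c w; rewrite linearZZ. Qed.

Lemma diffB_opnorm_ge0 f g x y : differentiable f x -> differentiable g y ->
  0 <= opnorm (fun v => 'd f x v - 'd g y v).
Proof. by move=> df dg; apply: opnorm_ge0 (diffB_bounded df dg). Qed.

Lemma ler_diffB_opnorm f g x y v : differentiable f x -> differentiable g y ->
  `|'d f x v - 'd g y v| <= opnorm (fun v => 'd f x v - 'd g y v) * `|v|.
Proof.
move=> df dg; apply: ler_opnorm (diffB_bounded df dg) v => c w.
by rewrite scalerBr !linearZZ.
Qed.

End DifferentialOperatorNorm.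

Section LipschitzDifferential.
Context {R : realType} {U W : normedModType R}.
Variables (F : U -> W) (L : R).
Hypotheses (dF : forall p, differentiable F p)
  (dF_lipschitz : forall p q, opnorm (fun v => 'd F p v - 'd F q v) <= L * `|p - q|).

Lemma ler_diffB_lipschitz p q u :
  `|'d F p u - 'd F q u| <= L * `|p - q| * `|u|.
Proof. by apply: le_trans (ler_diffB_opnorm u (dF p) (dF q)) _; apply: ler_wpM2r. Qed.

Lemma ler_diff_growth p u :
  `|'d F p u| <= (opnorm ('d F 0) + L * `|p|) * `|u|.
Proof.
rewrite -(subrK ('d F 0 u) ('d F p u)) mulrDl addrC.
apply: le_trans (ler_normD _ _) _; apply: lerD; first exact: ler_diff_opnorm.
by have := ler_diffB_lipschitz p 0 u; rewrite subr0.
Qed.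

Lemma ler_diff_near_root p q u u' : 'd F q u' = 0 ->
  `|'d F p u| <= L * `|p - q| * `|u| + (opnorm ('d F 0) + L * `|q|) * `|u - u'|.
Proof.
move=> root_u'.
have -> : 'd F p u = ('d F p u - 'd F q u) + 'd F q (u - u').
  by rewrite linearB root_u' subr0 subrK.
apply: le_trans (ler_normD _ _) _.
by apply: lerD; [exact: ler_diffB_lipschitz | exact: ler_diff_growth].
Qed.

End LipschitzDifferential.

Lemma diff_graph_comp {R : realType} {X Y W : normedModType R}
    (F : (Y * X)%type -> W) (G : X -> Y) a :
  differentiable F (G a, a) -> differentiable G a ->
  'd (fun b => F (G b, b)) a = (fun v => 'd F (G a, a) ('d G a v, v)) :> (X -> W).
Proof.
move=> dF dG.
have dGid : differentiable (fun b => (G b, id b)) a by exact: differentiable_pair.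
rewrite (_ : (fun b => F (G b, b)) = F \o (fun b => (G b, id b))) //.
by rewrite diff_comp // diff_pair //= diff_val.
Qed.

Section PairNorm.
Context {R : realType} {X Y : normedModType R}.

Lemma normr_pair_le (y : Y) (x : X) : `|(y, x)| <= `|y| + `|x|.
Proof. by rewrite prod_normE ge_max /= lerDl lerDr !normr_ge0. Qed.

Lemma normr_pairB_common_snd (y y' : Y) (x : X) : `|(y, x) - (y', x)| = `|y - y'|.
Proof. by rewrite prod_normE /= subrr normr0; apply: max_l. Qed.

End PairNorm.

Lemma ler_error_poly {R : realFieldType} (l k g n x e0 e1 : R) :
  0 <= l -> 0 <= k -> 0 <= g -> 0 <= n -> 0 <= x -> 0 <= e0 -> 0 <= e1 ->
  l * e0 * (n + 1) + (k + l * (g + e0 + x)) * e1 <=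
  (l + k + 1) * (g + n + x + 1) * (e0 + e1 + e0 * e1).
Proof.
move=> l0 k0 g0 n0 x0 e00 e10.
set S := g + n + x + 1; set C := l + k + 1.
have S1 : 1 <= S by rewrite /S; lra.
have l_le : l <= C * S by rewrite -[l]mulr1; apply: ler_pM; rewrite /C; lra.
have ln_le : l * (n + 1) <= C * S by apply: ler_pM; rewrite /C /S; lra.
have klgx_le : k + l * (g + x) <= C * S by rewrite /C /S; nra.
have -> : l * e0 * (n + 1) + (k + l * (g + e0 + x)) * e1 =
    l * (n + 1) * e0 + (k + l * (g + x)) * e1 + l * (e0 * e1) by ring.
rewrite !(mulrDr (C * S)); apply: lerD; first apply: lerD.
- exact: ler_wpM2r.
- exact: ler_wpM2r.
- by apply: ler_wpM2r => //; apply: mulr_ge0.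
Qed.

Section StationaryPerturbation.
Context {R : realType} {X Y W : normedModType R}.
Variables (F : (Y * X)%type -> W) (L : R).
Hypotheses (dF : forall p, differentiable F p) (L_ge0 : 0 <= L)
  (dF_lipschitz : forall p q, opnorm (fun v => 'd F p v - 'd F q v) <= L * `|p - q|).
Variables (G Gw : X -> Y) (a : X).
Hypotheses (dG : differentiable G a) (dGw : differentiable Gw a)
  (Gw_stationary : forall v, 'd (fun b => F (Gw b, b)) a v = 0).

Let K0 := opnorm ('d F 0).
Let N := opnorm ('d G a).
Let E0 := `|G a - Gw a|.
Let E1 := opnorm (fun v => 'd G a v - 'd Gw a v).

Lemma ler_diff_graph_perturbed v :
  `|'d (fun b => F (G b, b)) a v|
    <= (L * E0 * (N + 1) + (K0 + L * (`|G a| + E0 + `|a|)) * E1) * `|v|.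
Proof.
have root := Gw_stationary v; rewrite diff_graph_comp // in root.
rewrite diff_graph_comp //.
apply: le_trans (ler_diff_near_root dF dF_lipschitz _ _ root) _.
have pq_norm : `|(G a, a) - (Gw a, a)| = E0 by rewrite normr_pairB_common_snd.
have q_le : `|(Gw a, a)| <= `|G a| + E0 + `|a|.
  apply: le_trans (normr_pair_le _ _) _; rewrite lerD2r.
  by rewrite -[Gw a](subrKC (G a)) (le_trans (ler_normD _ _)) // distrC.
have u_le : `|('d G a v, v)| <= (N + 1) * `|v|.
  apply: le_trans (normr_pair_le _ _) _.
  by rewrite mulrDl mul1r lerD2r ler_diff_opnorm.
have uu'_le : `|('d G a v, v) - ('d Gw a v, v)| <= E1 * `|v|.
  by rewrite normr_pairB_common_snd ler_diffB_opnorm.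
rewrite pq_norm [leRHS]mulrDl; apply: lerD.
- by rewrite -[leRHS]mulrA; apply: ler_wpM2l u_le; rewrite mulr_ge0 ?normr_ge0.
- rewrite -[leRHS]mulrA; apply: ler_pM => //.
  + by rewrite addr_ge0 ?mulr_ge0 ?diff_opnorm_ge0.
  + by rewrite lerD2l ler_wpM2l.
Qed.

End StationaryPerturbation.

Theorem proposition1 (R : realType) (X Y : completeNormedModType R)
  (F : (Y * X)%type -> R) :
  C1_lipschitz_deriv F ->
  exists2 C : R, 0 < C &
    forall (G Gw : X -> Y) (a : X),
      C1 G -> C1 Gw ->
      (forall v, 'd (fun b => F (Gw b, b)) a v = 0) ->
      let E0 := `|G a - Gw a| in
      let E1 := opnorm (fun v => 'd G a v - 'd Gw a v) in
      opnorm ('d (fun b => F (G b, b)) a)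
        <= C * (`|G a| + opnorm ('d G a) + `|a| + 1) * (E0 + E1 + E0 * E1).
Proof.
move=> [[dF _] [L dF_lipschitz]].
have dF_lipschitz_abs p q :
    opnorm (fun v => 'd F p v - 'd F q v) <= `|L| * `|p - q|.
  by apply: le_trans (dF_lipschitz p q) _; apply: ler_wpM2r; rewrite ?ler_norm.
have K0_ge0 := diff_opnorm_ge0 (dF 0).
exists (`|L| + opnorm ('d F 0) + 1); first by rewrite ltr_wpDl ?addr_ge0.
move=> G Gw a [dG _] [dGw _] Gw_stationary /=.
have E1_ge0 := diffB_opnorm_ge0 (dG a) (dGw a).
apply: opnorm_le => [|v].
  by rewrite !mulr_ge0 ?addr_ge0 ?mulr_ge0 ?diff_opnorm_ge0.
have := ler_diff_graph_perturbed dF (normr_ge0 L) dF_lipschitz_abs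
  (dG a) (dGw a) Gw_stationary v.
move/le_trans; apply; apply: ler_wpM2r => //.
by apply: ler_error_poly; rewrite ?diff_opnorm_ge0.
Qed.
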